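(* Let $M=(\mathit{AP}_f,S,T,V,\{\sim_o\}_{o\in\mathit{Obs}},s_\iota,o_\iota)$ be a model and $\Phi$ a CTL*KΔ formula. Let $M'$ and $\Phi'=\mathrm{tr}_{o_\iota}(\Phi)$ be as defined in the context. Then $M\models\Phi$ if and only if $M'\models\Phi'$.
   Context: Fix a countably infinite set $\mathit{AP}$ of atomic propositions and a finite nonempty set $\mathit{Obs}$ of observations. For a word $w$ we write $w_i$ for its letter at position $i$ (positions start at $0$), $w_{\le i}$ for its prefix ending at position $i$, $|w|$ for the length of a finite word, and $\mathit{last}(w)$ for the last letter of a finite word; $w\preceq w'$ means $w$ is a prefix of $w'$. Syntax of CTL*KΔ (single agent): history formulas $\varphi::=p\mid\neg\varphi\mid\varphi\wedge\varphi\mid\mathbf A\psi\mid\mathbf K\varphi\mid\Delta^{o}\varphi$ and path formulas $\psi::=\varphi\mid\neg\psi\mid\psi\wedge\psi\mid\mathbf X\psi\mid\psi\,\mathbf U\,\psi$, with $p\in\mathit{AP}$ and $o\in\mathit{Obs}$; the formulas of the logic are the history formulas. CTL*K is the fragment without $\Delta^o$. Abbreviations: $\top=p\vee\neg p$, $\vee,\to$ as usual, $\mathbf F\psi=\top\mathbf U\psi$, $\mathbf G\psi=\neg\mathbf F\neg\psi$. A model is $M=(\mathit{AP}_f,S,T,V,\{\sim_o\}_{o\in O},s_\iota,o_\iota)$ over some finite observation set $O$ (here $O=\mathit{Obs}$ unless stated otherwise), where $\mathit{AP}_f\subseteq\mathit{AP}$ is finite, $S$ is a finite set of states, $T\subseteq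 S\times S$ is left-total, $V:S\to 2^{\mathit{AP}_f}$, each $\sim_o$ is an equivalence relation on $S$, $s_\iota\in S$ and $o_\iota\in O$. A path is an infinite sequence $\pi=s_0s_1\dots$ of states with $s_i\,T\,s_{i+1}$ for all $i$ (starting at any state); a history is a finite nonempty prefix of a path. An observation record is a finite word over $O\times\mathbb N$; $\epsilon$ is the empty record, $r\cdot(o,n)$ is $r$ with $(o,n)$ appended, and $r_{=n}$ is the subword of $r$ consisting of the pairs whose second component is $n$. The list $\mathit{ol}(r,n)$ is defined by $\mathit{ol}(r,0)=o_\iota\cdot o_1\cdots o_k$ if $r_{=0}=(o_1,0)\cdots(o_k,0)$, and $\mathit{ol}(r,n+1)=\mathit{last}(\mathit{ol}(r,n))\cdot o_1\cdots o_k$ if $r_{=n+1}=(o_1,n+1)\cdots(o_k,n+1)$. Two histories are equivalent, $h\approx_r h'$, if $|h|=|h'|$ and for every $i<|h|$ and every $o$ occurring in $\mathit{ol}(r,i)$, $h_i\sim_o h'_i$. Natural semantics: for a history $h$ and record $r$: $h,r\models p$ iff $p\in V(\mathit{last}(h))$; $h,r\models\neg\varphi$ iff not $h,r\models\varphi$; $h,r\models\varphi_1\wedge\varphi_2$ iff both hold; $h,r\models\mathbf A\psi$ iff for all paths $\pi$ with $h\preceq\pi$, $\pi,|h|-1,r\models\psi$; $h,r\models\mathbf K\varphi$ iff $h',r\models\varphi$ for all histories $h'$ with $h'\approx_r h$; $h,r\models\Delta^o\varphi$ iff $h,r\cdot(o,|h|-1)\models\varphi$. For a path $\pi$, $n\in\mathbb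 N$ and record $r$: $\pi,n,r\models\varphi$ iff $\pi_{\le n},r\models\varphi$; negation and conjunction as usual; $\pi,n,r\models\mathbf X\psi$ iff $\pi,n+1,r\models\psi$; $\pi,n,r\models\psi_1\mathbf U\psi_2$ iff there is $m\ge n$ with $\pi,m,r\models\psi_2$ and $\pi,k,r\models\psi_1$ for all $n\le k<m$. $M\models\varphi$ iff $s_\iota,\epsilon\models\varphi$ ($s_\iota$ viewed as a one-state history). Construction of $M'$: for each $o\in\mathit{Obs}$ let $p_o\in\mathit{AP}\setminus\mathit{AP}_f$ be a fresh atomic proposition (pairwise distinct). $M'$ is the model over the one-element observation set $\{*\}$ with propositions $\mathit{AP}_f\cup\{p_o\mid o\in\mathit{Obs}\}$, states $S'=\{s_o\mid s\in S,\ o\in\mathit{Obs}\}$ (one copy $s_o$ of each state per observation), transitions $T'=\{(s_o,s'_o)\mid o\in\mathit{Obs},\ (s,s')\in T\}\cup\{(s_o,s_{o'})\mid s\in S,\ o,o'\in\mathit{Obs},\ o\ne o'\}$, valuation $V'(s_o)=V(s)\cup\{p_o\}$, single equivalence relation $\sim_*=\{(s_o,s'_o)\mid o\in\mathit{Obs},\ s\sim_o s'\}$, initial state $(s_\iota)_{o_\iota}$ and initial observation $*$. Translation $\mathrm{tr}_o$, for $o\in\mathit{Obs}$, defined by induction: $\mathrm{tr}_o(p)=p$; $\mathrm{tr}_o(\neg\varphi)=\neg\mathrm{tr}_o(\varphi)$; $\mathrm{tr}_o(\varphi_1\wedge\varphi_2)=\mathrm{tr}_o(\varphi_1)\wedge\mathrm{tr}_o(\varphi_2)$;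 $\mathrm{tr}_o(\mathbf K\varphi)=\mathbf K\,\mathrm{tr}_o(\varphi)$; $\mathrm{tr}_o(\mathbf A\psi)=\mathbf A(\mathbf G p_o\to\mathrm{tr}_o(\psi))$; $\mathrm{tr}_o(\Delta^{o'}\varphi)=\mathrm{tr}_{o'}(\varphi)$ if $o'=o$ and $\mathrm{tr}_o(\Delta^{o'}\varphi)=\mathbf A\mathbf X(p_{o'}\to\mathrm{tr}_{o'}(\varphi))$ if $o'\ne o$; on path formulas $\mathrm{tr}_o$ commutes with $\neg,\wedge,\mathbf X,\mathbf U$ and applies the history-formula clauses to history subformulas. $\Phi'=\mathrm{tr}_{o_\iota}(\Phi)$, a CTL*K formula. *)

From mathcomp Require Import all_boot.
Set Implicit Arguments. Unset Strict Implicit. Unset Printing Implicit Defensive.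

Inductive hform (O : Type) : Type :=
  | HAtom  : nat -> hform O
  | HNeg   : hform O -> hform O
  | HAnd   : hform O -> hform O -> hform O
  | HA     : pform O -> hform O
  | HK     : hform O -> hform O
  | HDelta : O -> hform O -> hform O
with pform (O : Type) : Type :=
  | PH   : hform O -> pform O
  | PNeg : pform O -> pform O
  | PAnd : pform O -> pform O -> pform O
  | PX   : pform O -> pform O
  | PU   : pform O -> pform O -> pform O.

Arguments HAtom {O}. Arguments HNeg {O}. Arguments HAnd {O}. Arguments HA {O}.
Arguments HK {O}. Arguments HDelta {O}.
Arguments PH {O}. Arguments PNeg {O}. Arguments PAnd {O}. Arguments PX {O}.
Arguments PU {O}.

Definition hor {O} (a b : hform O) : hform O := HNeg (HAnd (HNeg a) (HNeg b)).
Definition himp {O} (a b : hform O) : hform O := hor (HNeg a) b.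
Definition htop {O} : hform O := hor (HAtom 0) (HNeg (HAtom 0)).
Definition por {O} (a b : pform O) : pform O := PNeg (PAnd (PNeg a) (PNeg b)).
Definition pimp {O} (a b : pform O) : pform O := por (PNeg a) b.
Definition PF {O} (a : pform O) : pform O := PU (PH htop) a.
Definition PG {O} (a : pform O) : pform O := PNeg (PF (PNeg a)).

Fixpoint hatoms {O} (f : hform O) : seq nat :=
  match f with
  | HAtom p => [:: p]
  | HNeg g => hatoms g
  | HAnd g1 g2 => hatoms g1 ++ hatoms g2
  | HA g => patoms g
  | HK g => hatoms g
  | HDelta _ g => hatoms g
  end
with patoms {O} (f : pform O) : seq nat :=
  match f with
  | PH g => hatoms g
  | PNeg g => patoms g
  | PAnd g1 g2 => patoms g1 ++ patoms g2
  | PX g => patoms g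
  | PU g1 g2 => patoms g1 ++ patoms g2
  end.

Record model (O : finType) : Type := Model {
  APf : seq nat;
  St  : finType;
  Tr  : rel St;
  Val : St -> seq nat;
  Sim : O -> rel St;
  s0  : St;
  o0  : O
}.
Arguments APf {O}. Arguments St {O}. Arguments Tr {O}. Arguments Val {O}.
Arguments Sim {O}. Arguments s0 {O}. Arguments o0 {O}.

Definition wf_model {O : finType} (M : model O) : Prop :=
  (forall s, all (fun p => p \in APf M) (Val M s)) /\
  (forall s, exists s', Tr M s s') /\
  (forall o, reflexive (Sim M o) /\ symmetric (Sim M o) /\ transitive (Sim M o)).

Section Semantics.
Variables (O : finType) (M : model O).

Definition is_path (pi : nat -> St M) : Prop := forall i, Tr M (pi i) (pi i.+1).

Definition is_history (h : seq (St M)) : Prop :=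
  match h with [::] => False | x :: t => path (Tr M) x t end.

Definition hprefix (h : seq (St M)) (pi : nat -> St M) : Prop :=
  h = mkseq pi (size h).

Definition record := seq (O * nat).

Definition obs_at (r : record) (n : nat) : seq O :=
  [seq x.1 | x <- r & x.2 == n].

Fixpoint ol (r : record) (n : nat) : seq O :=
  match n with
  | 0 => o0 M :: obs_at r 0
  | n'.+1 => last (o0 M) (ol r n') :: obs_at r n'.+1
  end.

Definition hequiv (r : record) (h h' : seq (St M)) : Prop :=
  size h = size h' /\
  forall i, i < size h -> forall o, o \in ol r i ->
    Sim M o (nth (s0 M) h i) (nth (s0 M) h' i).

Fixpoint hsat (f : hform O) (h : seq (St M)) (r : record) {struct f} : Prop :=
  match f with
  | HAtom p => p \in Val M (last (s0 M) h)
  | HNeg g => ~ hsat g h r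
  | HAnd g1 g2 => hsat g1 h r /\ hsat g2 h r
  | HA g => forall pi, is_path pi -> hprefix h pi -> psat g pi (size h).-1 r
  | HK g => forall h', is_history h' -> hequiv r h' h -> hsat g h' r
  | HDelta o g => hsat g h (rcons r (o, (size h).-1))
  end
with psat (f : pform O) (pi : nat -> St M) (n : nat) (r : record) {struct f} : Prop :=
  match f with
  | PH g => hsat g (mkseq pi n.+1) r
  | PNeg g => ~ psat g pi n r
  | PAnd g1 g2 => psat g1 pi n r /\ psat g2 pi n r
  | PX g => psat g pi n.+1 r
  | PU g1 g2 => exists m, n <= m /\ psat g2 pi m r /\
                  (forall k, n <= k -> k < m -> psat g1 pi k r)
  end.

Definition msat (f : hform O) : Prop := hsat f [:: s0 M] [::].

End Semantics.

Section Construction.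
Variables (Obs : finType) (p : Obs -> nat).

Definition Mprime (M : model Obs) : model unit :=
  @Model unit
    (APf M ++ map p (enum Obs))
    (St M * Obs)%type
    (fun x y => ((x.2 == y.2) && Tr M x.1 y.1) || ((x.1 == y.1) && (x.2 != y.2)))
    (fun x => rcons (Val M x.1) (p x.2))
    (fun _ x y => (x.2 == y.2) && Sim M x.2 x.1 y.1)
    (s0 M, o0 M)
    tt.

Fixpoint tr (o : Obs) (f : hform Obs) {struct f} : hform unit :=
  match f with
  | HAtom q => HAtom q
  | HNeg g => HNeg (tr o g)
  | HAnd g1 g2 => HAnd (tr o g1) (tr o g2)
  | HK g => HK (tr o g)
  | HA g => HA (pimp (PG (PH (HAtom (p o)))) (trp o g))
  | HDelta o' g =>
      if o' == o then tr o' g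
      else HA (PX (PH (himp (HAtom (p o')) (tr o' g))))
  end
with trp (o : Obs) (f : pform Obs) {struct f} : pform unit :=
  match f with
  | PH g => PH (tr o g)
  | PNeg g => PNeg (trp o g)
  | PAnd g1 g2 => PAnd (trp o g1) (trp o g2)
  | PX g => PX (trp o g)
  | PU g1 g2 => PU (trp o g1) (trp o g2)
  end.

End Construction.

(* A history h of M read under a record r is simulated in M' by its
   expansion: at time i it visits the copies of h_i for the observations of
   ol(r, i), consecutive repetitions removed, so that M' switches copies
   exactly where the agent makes a new observation.  Position-wise ~* on
   expansions is then the relation ≈_r, every M'-history ~*-related to an
   expansion is itself one, [Delta^o] appends a visit to copy o (or nothing
   when o is already current), and a path of M corresponds to a path of M'
   that eventually stays in the current copy, which is what [G p_o]
   enforces.  Induction on formulas then shows that h, r satisfies phi in M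
   iff the expansion of h satisfies tr_c(phi) in M', where c is the current
   observation; the initial history expands to the initial state of M'. *)

From mathcomp Require Import all_boot zify.
From Stdlib Require Import Classical.
Set Implicit Arguments. Unset Strict Implicit. Unset Printing Implicit Defensive.

Lemma all2_nthP (A B : Type) (a0 : A) (b0 : B) (R : A -> B -> bool) s t :
  all2 R s t <-> size s = size t /\ forall i, i < size s -> R (nth a0 s i) (nth b0 t i).
Proof.
elim: s t => [|a s IH] [|b t] /=;
  [by split | by split=> // -[] | by split=> // -[] | split].
- move=> /andP [Rab /IH [-> Rst]]; split=> // -[|i] //; exact: Rst.
- case=> [[Est] Rst]; rewrite (Rst 0 erefl); apply/IH; split=> // i.
  exact: (Rst i.+1).
Qed.

Lemma all2_cat (A B : Type) (R : A -> B -> bool) s1 s2 t1 t2 :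
  size s1 = size t1 -> all2 R (s1 ++ s2) (t1 ++ t2) = all2 R s1 t1 && all2 R s2 t2.
Proof. by elim: s1 t1 => [|a s IH] [|b t] //= [/IH ->]; rewrite andbA. Qed.

Lemma mkseqD (T : Type) (f : nat -> T) a b :
  mkseq f (a + b) = mkseq f a ++ mkseq (fun k => f (a + k)) b.
Proof.
rewrite /mkseq iotaD map_cat add0n; congr (_ ++ _).
by rewrite -{1}(addn0 a) iotaDl -map_comp.
Qed.

Lemma last_mkseqS (T : Type) (f : nat -> T) z m : last z (mkseq f m.+1) = f m.
Proof. by rewrite mkseqS last_rcons. Qed.

Section RconsNew.
Variables (T : eqType) (x0 : T).

Definition rcons_new (s : seq T) (x : T) :=
  if x == last x0 s then s else rcons s x.

Definition rcons_news := foldl rcons_new.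

Lemma rcons_new_neq0 s x : s != [::] -> rcons_new s x != [::].
Proof. by rewrite /rcons_new; case: ifP => // _; case: s. Qed.

Lemma rcons_news_neq0 s l : s != [::] -> rcons_news s l != [::].
Proof. by elim: l s => [|x l IH] s //= /(rcons_new_neq0 x)/IH. Qed.

Lemma last_rcons_news s l : s != [::] -> last x0 (rcons_news s l) = last (last x0 s) l.
Proof.
elim: l s => [|x l IH] s s_neq0 //=; rewrite IH ?rcons_new_neq0 // /rcons_new.
by case: ifP => [/eqP <-|_]; rewrite ?last_rcons.
Qed.

Lemma head_rcons_news s l : s != [::] -> head x0 (rcons_news s l) = head x0 s.
Proof.
elim: l s => [|x l IH] s s_neq0 //=; rewrite IH ?rcons_new_neq0 // /rcons_new.
by case: ifP => // _; case: s s_neq0.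
Qed.

Lemma mem_rcons_news s l y : s != [::] -> (y \in rcons_news s l) = (y \in s) || (y \in l).
Proof.
elim: l s => [|x l IH] s s_neq0 /=; first by rewrite orbF.
rewrite IH ?rcons_new_neq0 // in_cons /rcons_new; case: ifP => [/eqP ->|_].
  have [->|_] := eqVneq y (last x0 s); last by rewrite orbA.
  by case: s s_neq0 => // a s _ /=; rewrite mem_last.
by rewrite mem_rcons in_cons orbCA orbA.
Qed.

Lemma sorted_rcons_news s l : sorted (fun a b => a != b) s ->
  sorted (fun a b => a != b) (rcons_news s l).
Proof.
elim: l s => [|x l IH] s //= s_sorted; apply: IH; rewrite /rcons_new.
case: ifP => // x_new; case: s s_sorted x_new => //= a s.
by rewrite rcons_path => -> /=; rewrite eq_sym => ->.
Qed.

End RconsNew.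

Section ObservationBlocks.
Variables (Obs : finType) (M : model Obs).
Implicit Types (r : record Obs) (o : Obs).

Definition ol_head r i :=
  if i is n.+1 then last (o0 M) (ol M r n) else o0 M.

Definition ol_last r i := last (o0 M) (ol M r i).

(* [ol M r i] with adjacent repetitions removed. *)
Definition obs_block r i := rcons_news (o0 M) [:: ol_head r i] (obs_at r i).

Lemma olE r i : ol M r i = ol_head r i :: obs_at r i.
Proof. by case: i. Qed.

Lemma ol_headS r i : ol_head r i.+1 = ol_last r i.
Proof. by []. Qed.

Lemma obs_block_neq0 r i : obs_block r i != [::].
Proof. exact: rcons_news_neq0. Qed.

Lemma mem_obs_block r i o : (o \in obs_block r i) = (o \in ol M r i).
Proof. by rewrite mem_rcons_news // olE !in_cons in_nil orbF. Qed.

Lemma last_obs_block r i : last (o0 M) (obs_block r i) = ol_last r i.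
Proof. by rewrite last_rcons_news // /ol_last olE. Qed.

Lemma obs_blockE r i : obs_block r i = ol_head r i :: behead (obs_block r i).
Proof.
have := obs_block_neq0 r i; rewrite /obs_block.
have := head_rcons_news (o0 M) (obs_at r i) (isT : [:: ol_head r i] != [::]).
by case: rcons_news => //= a l ->.
Qed.

Lemma sorted_obs_block r i : sorted (fun a b => a != b) (obs_block r i).
Proof. exact: sorted_rcons_news. Qed.

Lemma path_obs_block r i :
  path (fun a b => a != b) (ol_head r i) (behead (obs_block r i)).
Proof. by have := sorted_obs_block r i; rewrite obs_blockE. Qed.

Lemma last_behead_obs_block r i :
  last (ol_head r i) (behead (obs_block r i)) = ol_last r i.
Proof. by rewrite -last_obs_block [in RHS]obs_blockE. Qed.

Lemma obs_at_rcons r o n k :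
  obs_at (rcons r (o, n)) k = if k == n then rcons (obs_at r k) o else obs_at r k.
Proof. by rewrite /obs_at filter_rcons /= eq_sym; case: ifP; rewrite ?map_rcons. Qed.

Lemma obs_at_out r n k : all (fun e => e.2 <= n) r -> n < k -> obs_at r k = [::].
Proof.
move=> /allP r_le n_lt_k; rewrite /obs_at.
suff -> : [seq e <- r | e.2 == k] = [::] by [].
apply/eqP; rewrite -[_ == _]negbK -has_filter; apply/hasPn => e /r_le; apply: contraL => /eqP ->.
by rewrite -ltnNge.
Qed.

Lemma ol_last_out r n m : all (fun e => e.2 <= n) r -> n <= m -> ol_last r m = ol_last r n.
Proof.
move=> r_le; elim: m => [|m IH]; first by rewrite leqn0 => /eqP ->.
rewrite leq_eqVlt => /predU1P [<- //|n_lt_m].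
by rewrite /ol_last /= (obs_at_out r_le n_lt_m); exact: IH.
Qed.

Lemma obs_block_out r n k : all (fun e => e.2 <= n) r -> n < k ->
  obs_block r k = [:: ol_last r n].
Proof.
move=> r_le n_lt_k; rewrite /obs_block (obs_at_out r_le n_lt_k).
by case: k n_lt_k => // k; rewrite ltnS => /(ol_last_out r_le) <-.
Qed.

Lemma ol_rcons_lt r o n k : k < n -> ol M (rcons r (o, n)) k = ol M r k.
Proof.
elim: k => [|k IH] k_lt_n /=; rewrite obs_at_rcons.
  by rewrite ltn_eqF.
by rewrite IH ?(ltnW k_lt_n) // ltn_eqF.
Qed.

Lemma ol_head_rcons r o n k : k <= n -> ol_head (rcons r (o, n)) k = ol_head r k.
Proof. by case: k => //= k /ol_rcons_lt ->. Qed.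

Lemma obs_block_rcons_lt r o n k : k < n -> obs_block (rcons r (o, n)) k = obs_block r k.
Proof.
move=> k_lt_n; rewrite /obs_block ol_head_rcons ?(ltnW k_lt_n) //.
by rewrite obs_at_rcons ltn_eqF.
Qed.

Lemma obs_block_rcons r o n :
  obs_block (rcons r (o, n)) n = rcons_new (o0 M) (obs_block r n) o.
Proof. by rewrite /obs_block ol_head_rcons // obs_at_rcons eqxx /rcons_news foldl_rcons. Qed.

Lemma ol_last_rcons r o n : ol_last (rcons r (o, n)) n = o.
Proof.
rewrite -last_obs_block obs_block_rcons /rcons_new.
by case: ifP => [/eqP //|_]; rewrite last_rcons.
Qed.

Fixpoint expand r (h : seq (St M)) i : seq (St M * Obs) :=
  if h is x :: t then [seq (x, c) | c <- obs_block r i] ++ expand r t i.+1 else [::].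

Lemma expand_cat r h1 h2 i :
  expand r (h1 ++ h2) i = expand r h1 i ++ expand r h2 (i + size h1).
Proof. by elim: h1 i => [|x t IH] i /=; rewrite ?addn0 // IH catA addSnnS. Qed.

Lemma size_expand r h i : size h <= size (expand r h i).
Proof.
elim: h i => [|x t IH] i //=; rewrite size_cat size_map -add1n leq_add //.
by rewrite lt0n size_eq0 obs_block_neq0.
Qed.

Lemma expand_neq0 r h i : h != [::] -> expand r h i != [::].
Proof. by rewrite -!size_eq0 -!lt0n => /leq_trans; apply; apply: size_expand. Qed.

Lemma last_expand r h i z : h != [::] ->
  last z (expand r h i) = (last (s0 M) h, ol_last r (i + (size h).-1)).
Proof.
elim: h i z => [|x [|y t] IH] i z //= _; last by rewrite last_cat IH //= addSnnS.
rewrite cats0 addn0 -last_obs_block; have := obs_block_neq0 r i.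
by case: obs_block => //= c l _; rewrite last_map.
Qed.

Lemma eq_expand r r' h i : (forall k, i <= k < i + size h -> obs_block r k = obs_block r' k) ->
  expand r h i = expand r' h i.
Proof.
elim: h i => [|x t IH] i //= eq_r; rewrite eq_r ?leqnn ?addnS ?ltnS ?leq_addr //.
congr (_ ++ _); apply: IH => k /andP [i_lt_k k_lt]; apply: eq_r.
by rewrite (ltnW i_lt_k) -addSnnS.
Qed.

Lemma expand_out r h i c : (forall k, i <= k -> obs_block r k = [:: c]) ->
  expand r h i = [seq (x, c) | x <- h].
Proof.
elim: h i => [|x t IH] i //= r_out; rewrite r_out // (IH i.+1) // => k /ltnW.
exact: r_out.
Qed.

Lemma expand_rcons r o h : h != [::] ->
  expand (rcons r (o, (size h).-1)) h 0 =
  if o == ol_last r (size h).-1 then expand r h 0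
  else rcons (expand r h 0) (last (s0 M) h, o).
Proof.
case/lastP: h => [//|h x] _.
rewrite size_rcons /= -(cats1 h) !expand_cat /= add0n !cats0 last_cat /=.
rewrite (@eq_expand _ r); last by move=> k /andP [_ k_lt]; rewrite obs_block_rcons_lt.
rewrite obs_block_rcons /rcons_new last_obs_block.
by case: ifP => // _; rewrite map_rcons rcons_cat.
Qed.

Variable p : Obs -> nat.
Local Notation MP := (Mprime p M).

Lemma Tr_copy (x y : St M) c : Tr MP (x, c) (y, c) = Tr M x y.
Proof. by rewrite /= eqxx andbF orbF. Qed.

Lemma path_copy (x y : St M) c (s : seq (St MP)) :
  path (Tr MP) (x, c) ((y, c) :: s) = Tr M x y && path (Tr MP) (y, c) s.
Proof. by rewrite /= eqxx andbF orbF. Qed.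

Lemma path_switch (x : St M) c l : path (fun a b => a != b) c l ->
  path (Tr MP) (x, c) [seq (x, d) | d <- l].
Proof.
by rewrite (path_map (f := fun d => (x, d))); apply: sub_path => a b /= ->; rewrite eqxx orbT.
Qed.

Lemma last_switch (x : St M) (c : Obs) l : last (x, c) [seq (x, d) | d <- l] = (x, last c l).
Proof. by elim: l c => /=. Qed.

Lemma path_expand r t x i :
  path (Tr MP) (x, ol_last r i) (expand r t i.+1) = path (Tr M) x t.
Proof.
elim: t x i => [|y u IH] x i //.
rewrite -ol_headS [expand _ _ _]/= obs_blockE map_cons cat_cons path_copy cat_path.
by rewrite path_switch ?path_obs_block // last_switch last_behead_obs_block IH.
Qed.

Lemma sorted_expand r h i : sorted (Tr MP) (expand r h i) = sorted (Tr M) h.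
Proof.
case: h => [|x t] //=.
rewrite obs_blockE map_cons cat_cons /= cat_path path_switch ?path_obs_block //.
by rewrite last_map last_behead_obs_block path_expand.
Qed.

Lemma hequiv_MP (h' h : seq (St MP)) : hequiv [::] h' h <-> all2 (Sim MP tt) h' h.
Proof.
rewrite (all2_nthP (s0 MP) (s0 MP)); split=> -[eq_size sim]; split=> // i lt_i.
  by apply: (sim i lt_i tt); case: i lt_i.
by case=> _; apply: sim.
Qed.

(* [hequiv r] for histories starting at time [i]. *)
Fixpoint hequiv_from r i (h' h : seq (St M)) : Prop :=
  match h', h with
  | [::], [::] => True
  | x :: t, y :: u => (forall o, o \in obs_block r i -> Sim M o x y) /\ hequiv_from r i.+1 t u
  | _, _ => False
  end.

Lemma hequiv_fromP r i h' h : hequiv_from r i h' h <->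
  size h' = size h /\ forall k, k < size h' -> forall o, o \in obs_block r (i + k) ->
     Sim M o (nth (s0 M) h' k) (nth (s0 M) h k).
Proof.
elim: h' h i => [|x t IH] [|y u] i /=; split => //; try by case.
- case=> sim0 /IH [-> sim]; split=> // -[_ o|k lt_k o]; first by rewrite addn0; exact: sim0.
  by rewrite -addSnnS; exact: sim.
- case=> [[eq_size] sim]; split; first by move=> o; rewrite -(addn0 i); exact: (sim 0).
  by apply/IH; split=> // k lt_k o; rewrite addSnnS; exact: (sim k.+1).
Qed.

Lemma hequivE r h' h : hequiv r h' h <-> hequiv_from r 0 h' h.
Proof.
rewrite hequiv_fromP; split=> -[eq_size sim]; split=> // k lt_k o.
  by rewrite add0n mem_obs_block; exact: sim.
by rewrite -mem_obs_block; exact: sim.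
Qed.

Lemma all2_switch (x y : St M) l :
  all2 (Sim MP tt) [seq (x, c) | c <- l] [seq (y, c) | c <- l] = all (fun c => Sim M c x y) l.
Proof. by elim: l => //= c l ->; rewrite eqxx. Qed.

Lemma all2_expand r i h' h :
  hequiv_from r i h' h -> all2 (Sim MP tt) (expand r h' i) (expand r h i).
Proof.
elim: h' h i => [|x t IH] [|y u] i //= [sim_xy /IH sim_tu].
rewrite all2_cat ?size_map // all2_switch sim_tu andbT.
by apply/allP => o; apply: sim_xy.
Qed.

(* In [M'] a step between distinct observations cannot change the state. *)
Lemma switch_sorted (H : seq (St MP)) z : sorted (Tr MP) H ->
  sorted (fun a b => a != b) (map snd H) -> H = [seq ((head z H).1, c) | c <- map snd H].
Proof.
elim: H => [|[x c] [|[y d] H] IH] //= /andP [Tr_xy sorted_H] /andP [c_neq_d sorted_snd].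
move: Tr_xy; rewrite (negbTE c_neq_d) /= andbT => /eqP ->.
by rewrite [in LHS](IH sorted_H sorted_snd).
Qed.

Lemma all2_snd (H : seq (St MP)) (y : St M) l :
  all2 (Sim MP tt) H [seq (y, c) | c <- l] -> map snd H = l.
Proof. by elim: H l => [|a H IH] [|c l] //= /andP [/andP [/eqP -> _] /IH ->]. Qed.

Lemma all2_expandP r i (H : seq (St MP)) h :
  sorted (Tr MP) H -> all2 (Sim MP tt) H (expand r h i) ->
  exists2 h', H = expand r h' i & hequiv_from r i h' h.
Proof.
elim: h H i => [|y u IH] H i /=; first by case: H => // _ _; exists [::].
set n := size (obs_block r i) => sorted_H sim_H.
have size_H : size H = n + size (expand r u i.+1).
  by move: sim_H; rewrite all2E size_cat size_map => /andP [/eqP].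
rewrite -(cat_take_drop n H) in sorted_H sim_H *.
rewrite all2_cat in sim_H; last by rewrite size_map -/n size_take size_H; case: ltnP; lia.
case/andP: sim_H => sim_blk sim_rest; case/cat_sorted2: sorted_H => sorted_blk sorted_rest.
have [h' -> sim_h'] := IH _ _ sorted_rest sim_rest.
have snd_blk := all2_snd sim_blk.
have blkE := switch_sorted (s0 MP) sorted_blk.
rewrite snd_blk in blkE; have {}blkE := blkE (sorted_obs_block r i).
exists ((head (s0 MP) (take n H)).1 :: h') => /=; first by rewrite -blkE.
by split=> //; move: sim_blk; rewrite {1}blkE all2_switch => /allP.
Qed.

End ObservationBlocks.

Section Histories.
Variables (O : finType) (N : model O).

Lemma historyE (h : seq (St N)) : is_history h <-> h != [::] /\ sorted (Tr N) h.
Proof. by case: h => [|x t] /=; split => // -[]. Qed.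

Lemma history_mkseq (π : nat -> St N) m : is_path π -> is_history (mkseq π m.+1).
Proof.
move=> path_π; apply/historyE; rewrite -size_eq0 size_mkseq; split=> //.
by apply/(sortedP (π 0)) => i; rewrite size_mkseq => lt_i; rewrite !nth_mkseq // ltnW.
Qed.

Lemma hprefix_nth (h : seq (St N)) π x k : hprefix h π -> k < size h -> nth x h k = π k.
Proof. by move=> -> lt_k; rewrite nth_mkseq // -(size_mkseq π (size h)). Qed.

Lemma hprefix_last (h : seq (St N)) π :
  hprefix h π -> h != [::] -> last (s0 N) h = π (size h).-1.
Proof.
by move=> pre h_neq0; rewrite -nth_last (hprefix_nth _ pre) // prednK // lt0n size_eq0.
Qed.

Lemma hprefix_mkseq (h : seq (St N)) π :
  (forall i, i < size h -> π i = nth (s0 N) h i) -> hprefix h π.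
Proof.
move=> π_h; apply: (@eq_from_nth _ (s0 N)); rewrite ?size_mkseq // => i lt_i.
by rewrite nth_mkseq // π_h.
Qed.

Lemma history_ext_path : (forall s, exists s', Tr N s s') ->
  forall h, is_history h -> exists2 π : nat -> St N, is_path π & hprefix h π.
Proof.
move=> total h /historyE [h_neq0 sorted_h].
pose next s := odflt s [pick s' | Tr N s s'].
have Tr_next s : Tr N s (next s).
  by rewrite /next; case: pickP => [//|none]; have [s' /[dup]] := total s; rewrite none.
pose π k := if k < size h then nth (s0 N) h k else iter (k - size h).+1 next (last (s0 N) h).
exists π; last by apply: hprefix_mkseq => i lt_i; rewrite /π lt_i.
have lt0h : 0 < size h by rewrite lt0n size_eq0.
move=> k; rewrite /π; case: (ltnP k.+1 (size h)) => [lt_k1|le_k1].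
  by rewrite (ltnW lt_k1); apply: (sortedP _ sorted_h).
case: (ltnP k (size h)) => [lt_k|le_k]; last by rewrite subSn //=.
have -> : k = (size h).-1 by lia.
by rewrite nth_last prednK // subnn.
Qed.

Lemma psat_pimp a b (π : nat -> St N) n r :
  psat (pimp a b) π n r <-> (psat a π n r -> psat b π n r).
Proof. by rewrite /=; split=> [H ? |]; [apply: NNPP => ?; apply: H | ]; tauto. Qed.

Lemma hsat_himp a b h r : hsat (M:=N) (himp a b) h r <-> (hsat a h r -> hsat b h r).
Proof. by rewrite /=; split=> [H ? |]; [apply: NNPP => ?; apply: H | ]; tauto. Qed.

End Histories.

Scheme hform_ind_mut := Induction for hform Sort Prop
  with pform_ind_mut := Induction for pform Sort Prop.
Combined Scheme form_ind_mut from hform_ind_mut, pform_ind_mut.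

Section Translation.
Variables (Obs : finType) (M : model Obs) (p : Obs -> nat).
Hypotheses (M_wf : wf_model M) (p_inj : injective p) (p_fresh : forall o, p o \notin APf M).
Local Notation MP := (Mprime p M).

Lemma mem_p_Val (y : St MP) c : (p c \in Val MP y) = (y.2 == c).
Proof.
rewrite /= mem_rcons in_cons (inj_eq p_inj) eq_sym; case: eqP => //= _.
by apply/negP => /(allP (M_wf.1 y.1)); apply/negP.
Qed.

Lemma psat_atom (Π : nat -> St MP) m q : psat (PH (HAtom q)) Π m [::] <-> q \in Val MP (Π m).
Proof. by rewrite -(last_mkseqS Π (s0 MP)). Qed.

Lemma psat_G_copy (Π : nat -> St MP) n c :
  psat (PG (PH (HAtom (p c)))) Π n [::] <-> forall m, n <= m -> (Π m).2 = c.
Proof.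
split=> [G_c m le_nm | G_c [m [le_nm [not_c _]]]].
  apply: NNPP => neq_c; apply: G_c; exists m; split=> //; split; last by move=> ? ? ? [].
  by move/psat_atom; rewrite mem_p_Val => /eqP.
by apply/not_c/psat_atom; rewrite mem_p_Val G_c.
Qed.

Lemma MP_total (y : St MP) : exists y', Tr MP y y'.
Proof. by have [s' Tr_s'] := M_wf.2.1 y.1; exists (s', y.2); rewrite /= eqxx Tr_s'. Qed.

(* The only successor of [(x, c)] satisfying [p o'] is [(x, o')]. *)
Lemma hsat_switch (H : seq (St MP)) x c o' F :
  is_history H -> last (s0 MP) H = (x, c) -> o' != c ->
  hsat F (rcons H (x, o')) [::] <-> hsat (HA (PX (PH (himp (HAtom (p o')) F)))) H [::].
Proof.
move=> /historyE [H_neq0 sorted_H] last_H o'_neq_c.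
have lt0H : 0 < size H by rewrite lt0n size_eq0.
have mkseq_next (Π : nat -> St MP) : hprefix H Π ->
    mkseq Π (size H).-1.+2 = rcons H (Π (size H)) by rewrite prednK // mkseqS => <-.
split=> [F_x Π path_Π pre_H | HA_F].
  change (hsat (himp (HAtom (p o')) F) (mkseq Π (size H).-1.+2) [::]).
  rewrite mkseq_next //; apply/hsat_himp; rewrite /= last_rcons mem_p_Val => /eqP Π_o'.
  have := path_Π (size H).-1; rewrite -(hprefix_last pre_H) // last_H prednK //.
  rewrite /= Π_o' (eq_sym c) (negbTE o'_neq_c) /= andbT => /eqP x_Π.
  by rewrite -Π_o' x_Π -surjective_pairing in F_x.
have hist : is_history (rcons H (x, o')).
  apply/historyE; split; first by case: (H).
  case: (H) sorted_H last_H => // a t /=; rewrite rcons_path => -> /= ->.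
  by rewrite /= eqxx eq_sym o'_neq_c orbT.
have [Π path_Π] := history_ext_path MP_total hist.
rewrite /hprefix size_rcons mkseqS => /rcons_inj [pre_H Π_x].
have : hsat (himp (HAtom (p o')) F) (mkseq Π (size H).-1.+2) [::] := HA_F Π path_Π pre_H.
rewrite mkseq_next // -Π_x => /hsat_himp; apply.
by rewrite /= last_rcons mem_p_Val.
Qed.

Definition expand_lag (r : record Obs) (h : seq (St M)) := size (expand r h 0) - size h.

Definition copy_path_after (r : record Obs) (h : seq (St M)) c (π : nat -> St M)
    (Π : nat -> St MP) :=
  forall k, (size h).-1 <= k -> Π (k + expand_lag r h) = (π k, c).

Lemma project_path (r : record Obs) (h : seq (St M)) (Π : nat -> St MP) :
  is_history h -> is_path Π -> hprefix (M:=MP) (expand r h 0) Π ->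
  (forall m, (size (expand r h 0)).-1 <= m -> (Π m).2 = ol_last M r (size h).-1) ->
  exists2 π, is_path π /\ hprefix h π & copy_path_after r h (ol_last M r (size h).-1) π Π.
Proof.
move=> /historyE [h_neq0 sorted_h] path_Π pre_H G_c.
have le_hH := size_expand r h 0.
(* [lia] sees [expand r h 0] at the two convertible types as distinct atoms. *)
have size_H : size (expand r h 0 : seq (St MP)) = size (expand r h 0) by [].
have lt0h : 0 < size h by rewrite lt0n size_eq0.
have last_H := last_expand r 0 (s0 MP) h_neq0; rewrite add0n in last_H.
pose π k := if k < size h then nth (s0 M) h k else (Π (k + expand_lag r h)).1.
have π_Π : copy_path_after r h (ol_last M r (size h).-1) π Π.
  move=> k le_k; rewrite /π; case: ltnP => [lt_k|le_hk].
    have -> : k = (size h).-1 by lia.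
    rewrite nth_last -[in RHS]last_H (hprefix_last pre_H) ?expand_neq0 //.
    by rewrite /expand_lag; congr Π; lia.
  by rewrite [LHS]surjective_pairing G_c // /expand_lag; lia.
exists π => //; split; last by apply: hprefix_mkseq => i lt_i; rewrite /π lt_i.
move=> k; case: (ltnP k.+1 (size h)) => [lt_k1|le_k1].
  by rewrite /π lt_k1 (ltnW lt_k1); apply: (sortedP _ sorted_h).
have le_k : (size h).-1 <= k by lia.
by have := path_Π (k + expand_lag r h); rewrite -addSn !π_Π ?(leqW le_k) // Tr_copy.
Qed.

Lemma lift_path (r : record Obs) (h : seq (St M)) (π : nat -> St M) :
  is_history h -> is_path π -> hprefix h π ->
  exists2 Π : nat -> St MP, is_path Π /\ hprefix (M:=MP) (expand r h 0) Π &
    copy_path_after r h (ol_last M r (size h).-1) π Π.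
Proof.
move=> /historyE [h_neq0 sorted_h] path_π pre_h.
set H := expand r h 0; set c := ol_last M r (size h).-1.
have le_hH : size h <= size H := size_expand r h 0.
have lt0h : 0 < size h by rewrite lt0n size_eq0.
have sorted_H : sorted (Tr MP) H by rewrite sorted_expand.
have last_H := last_expand r 0 (s0 MP) h_neq0; rewrite add0n in last_H.
pose Π k := if k < size H then nth (s0 MP) H k else (π (k - expand_lag r h), c).
have Π_π : copy_path_after r h c π Π.
  move=> k le_k; rewrite /Π /expand_lag -/H; case: ltnP => [lt_k|_]; last by rewrite addnK.
  have -> : k = (size h).-1 by lia.
  have -> : (size h).-1 + (size H - size h) = (size H).-1 by lia.
  by rewrite nth_last -/H last_H (hprefix_last pre_h).
exists Π => //; split; last by apply: hprefix_mkseq => i lt_i; rewrite /Π lt_i.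
move=> k; case: (ltnP k.+1 (size H)) => [lt_k1|le_k1].
  by rewrite /Π lt_k1 (ltnW lt_k1); apply: (sortedP _ sorted_H).
have le_k : (size h).-1 <= k - expand_lag r h by rewrite /expand_lag -/H; lia.
have -> : k = k - expand_lag r h + expand_lag r h by rewrite /expand_lag -/H; lia.
by rewrite -addSn !Π_π ?(leqW le_k) // Tr_copy.
Qed.

(* Past the last recorded time the observation blocks are the singleton
   [c], so extending a history of [M] extends its expansion by copy [c]. *)
Lemma mkseq_copy_path r (h : seq (St M)) π (Π : nat -> St MP) :
  h != [::] -> all (fun e => e.2 <= (size h).-1) r -> hprefix h π ->
  hprefix (M:=MP) (expand r h 0) Π -> copy_path_after r h (ol_last M r (size h).-1) π Π ->
  forall m, (size h).-1 <= m -> mkseq Π (m + expand_lag r h).+1 = expand r (mkseq π m.+1) 0.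
Proof.
move=> h_neq0 r_le pre_h pre_H Π_π m le_m.
have lt0h : 0 < size h by rewrite lt0n size_eq0.
have le_hH := size_expand r h 0.
have -> : m.+1 = size h + (m.+1 - size h) by lia.
have -> : (m + expand_lag r h).+1 = size (expand r h 0) + (m.+1 - size h).
  by rewrite /expand_lag; lia.
rewrite !mkseqD -pre_h -pre_H expand_cat add0n; congr (_ ++ _).
rewrite [in RHS](@expand_out _ _ _ _ _ (ol_last M r (size h).-1)); last first.
  by move=> k le_k; apply: obs_block_out r_le _; lia.
rewrite /mkseq -map_comp; apply: eq_map => k /=.
have -> : size (expand r h 0) + k = size h + k + expand_lag r h by rewrite /expand_lag; lia.
by rewrite Π_π //; lia.
Qed.

Definition fresh (s : seq nat) := forall o, p o \notin s.

Lemma fresh_cat s1 s2 : fresh (s1 ++ s2) -> fresh s1 /\ fresh s2.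
Proof. by move=> fr; split=> o; have := fr o; rewrite mem_cat negb_or => /andP []. Qed.

Definition tr_hsat_spec (f : hform Obs) := fresh (hatoms f) ->
  forall h r, is_history h -> all (fun e => e.2 < size h) r ->
  (hsat f h r <-> hsat (M:=MP) (tr p (ol_last M r (size h).-1) f) (expand r h 0) [::]).

(* A path [π] of [M] corresponds to a path [Π] of [M'] that, after time
   [m0] and with lag [d], follows the expansion of [π] in the copy [c]. *)
Definition tr_psat_spec (f : pform Obs) := fresh (patoms f) ->
  forall π (Π : nat -> St MP) r c m0 d,
  is_path π -> is_path Π -> all (fun e => e.2 <= m0) r ->
  (forall m, m0 <= m -> ol_last M r m = c) ->
  (forall m, m0 <= m -> mkseq Π (m + d).+1 = expand r (mkseq π m.+1) 0) ->
  forall m, m0 <= m -> (psat f π m r <-> psat (trp p c f) Π (m + d) [::]).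

Lemma tr_hsat_A ψ : tr_psat_spec ψ -> tr_hsat_spec (HA ψ).
Proof.
move=> IH fr h r hist_h r_lt; have [h_neq0 _] := (historyE h).1 hist_h.
set c := ol_last M r (size h).-1.
have lt0h : 0 < size h by rewrite lt0n size_eq0.
have le_hH := size_expand r h 0.
have r_le : all (fun e => e.2 <= (size h).-1) r.
  by apply: sub_all r_lt => e lt_e; rewrite -ltnS prednK.
have lagE : (size (expand r h 0)).-1 = (size h).-1 + expand_lag r h.
  by rewrite /expand_lag; lia.
have tr_ψ π Π : is_path π -> is_path Π -> hprefix h π ->
    hprefix (M:=MP) (expand r h 0) Π -> copy_path_after r h c π Π ->
    psat ψ π (size h).-1 r <-> psat (trp p c ψ) Π (size (expand r h 0)).-1 [::].
  move=> path_π path_Π pre_h pre_H π_Π; rewrite lagE.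
  apply: (IH fr π Π r c (size h).-1) => //; first by move=> m /(ol_last_out M r_le).
  exact: mkseq_copy_path.
change ((forall π, is_path π -> hprefix h π -> psat ψ π (size h).-1 r) <->
  (forall Π : nat -> St MP, is_path Π -> hprefix (M:=MP) (expand r h 0) Π ->
     psat (pimp (PG (PH (HAtom (p c)))) (trp p c ψ)) Π (size (expand r h 0)).-1 [::])).
split=> [ψ_h Π path_Π pre_H | ψ_H π path_π pre_h].
  apply/psat_pimp => /psat_G_copy G_c.
  have [π [path_π pre_h] π_Π] := project_path hist_h path_Π pre_H G_c.
  by apply/(tr_ψ π Π) => //; apply: ψ_h.
have [Π [path_Π pre_H] Π_π] := lift_path r hist_h path_π pre_h.
apply/(tr_ψ π Π) => //; move/psat_pimp: (ψ_H Π path_Π pre_H); apply.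
apply/psat_G_copy => m le_m.
have -> : m = m - expand_lag r h + expand_lag r h by lia.
by rewrite Π_π //; lia.
Qed.

Lemma tr_hsat_K g : tr_hsat_spec g -> tr_hsat_spec (HK g).
Proof.
move=> IH fr h r hist_h r_lt; have {}IH := IH fr.
have hist_expand h' : is_history h' -> is_history (expand r h' 0 : seq (St MP)).
  case/historyE=> h'_neq0 sorted_h'; apply/historyE.
  by rewrite expand_neq0 // sorted_expand.
split=> [K_h H' hist_H' /hequiv_MP sim_H' | K_H h' hist_h' /hequivE equiv_h'].
  have [H'_neq0 sorted_H'] := (historyE H').1 hist_H'.
  have [h' H'E equiv_h'] := all2_expandP sorted_H' sim_H'.
  have [size_h' _] := (hequiv_fromP _ _ _ _).1 equiv_h'.
  have hist_h' : is_history h'.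
    apply/historyE; split; last by rewrite -(sorted_expand p r h' 0) -H'E.
    by apply: contraNneq H'_neq0 => h'0; rewrite H'E h'0.
  rewrite H'E -size_h'; apply/IH => //; first by rewrite size_h'.
  by apply: K_h => //; apply/hequivE.
have [size_h' _] := (hequiv_fromP _ _ _ _).1 equiv_h'.
apply/IH => //; first by rewrite size_h'.
rewrite size_h'; apply: K_H; first exact: hist_expand.
by apply/hequiv_MP; apply: all2_expand.
Qed.

Lemma tr_hsat_Delta o g : tr_hsat_spec g -> tr_hsat_spec (HDelta o g).
Proof.
move=> IH fr h r hist_h r_lt; have [h_neq0 sorted_h] := (historyE h).1 hist_h.
have r'_lt : all (fun e => e.2 < size h) (rcons r (o, (size h).-1)).
  by rewrite all_rcons r_lt andbT /= prednK // lt0n size_eq0.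
have /= := IH fr h _ hist_h r'_lt; rewrite ol_last_rcons expand_rcons //.
case: ifP => [_ //|/negbT o_new ->]; apply: hsat_switch o_new.
  by apply/historyE; rewrite expand_neq0 // sorted_expand.
by rewrite last_expand.
Qed.

Lemma tr_psat_U g1 g2 : tr_psat_spec g1 -> tr_psat_spec g2 -> tr_psat_spec (PU g1 g2).
Proof.
move=> IH1 IH2 /fresh_cat [fr1 fr2] π Π r c m0 d path_π path_Π r_le c_after tracks m le_m.
have I1 := IH1 fr1 π Π r c m0 d path_π path_Π r_le c_after tracks.
have I2 := IH2 fr2 π Π r c m0 d path_π path_Π r_le c_after tracks.
split=> -[m' [le_m' [g2_m' g1_before]]].
  exists (m' + d); rewrite leq_add2r; split=> //; split.
    by apply/I2 => //; apply: leq_trans le_m le_m'.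
  move=> k le_k lt_k; have -> : k = k - d + d by lia.
  by apply/I1; [lia | apply: g1_before; lia].
have m'E : m' = m' - d + d by lia.
exists (m' - d); split; first by lia.
split; first by apply/I2; [lia | rewrite -m'E].
by move=> k le_k lt_k; apply/I1; [lia | apply: g1_before; lia].
Qed.

Lemma tr_sat_spec : (forall f, tr_hsat_spec f) /\ (forall f, tr_psat_spec f).
Proof.
apply: form_ind_mut.
- move=> q fr h r /historyE [h_neq0 _] _ /=.
  rewrite last_expand // add0n /= mem_rcons in_cons.
  by have := fr (ol_last M r (size h).-1); rewrite inE eq_sym => /negbTE ->.
- by move=> g IH fr h r hist_h r_lt /=; rewrite (IH fr h r hist_h r_lt).
- move=> g1 IH1 g2 IH2 /fresh_cat [fr1 fr2] h r hist_h r_lt /=.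
  by rewrite (IH1 fr1 h r hist_h r_lt) (IH2 fr2 h r hist_h r_lt).
- exact: tr_hsat_A.
- exact: tr_hsat_K.
- exact: tr_hsat_Delta.
- move=> g IH fr π Π r c m0 d path_π _ r_le c_after tracks m le_m /=.
  rewrite tracks // -(c_after m le_m) (IH fr) ?size_mkseq //; first exact: history_mkseq.
  by apply: sub_all r_le => e /leq_trans; apply.
- move=> g IH fr π Π r c m0 d path_π path_Π r_le c_after tracks m le_m /=.
  by rewrite (IH fr π Π r c m0 d).
- move=> g1 IH1 g2 IH2 /fresh_cat [fr1 fr2] π Π r c m0 d path_π path_Π r_le c_after tracks m le_m /=.
  by rewrite (IH1 fr1 π Π r c m0 d) ?(IH2 fr2 π Π r c m0 d).
- move=> g IH fr π Π r c m0 d path_π path_Π r_le c_after tracks m le_m /=.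
  by rewrite -addSn (IH fr π Π r c m0 d) // leqW.
- by move=> g1 IH1 g2 IH2; apply: tr_psat_U.
Qed.

End Translation.

Unset Implicit Arguments.

Theorem mainTheorem12 (Obs : finType) (M : model Obs) (p : Obs -> nat)
    (Phi : hform Obs) :
  wf_model M ->
  injective p ->
  (forall o, p o \notin APf M) ->
  (forall o, p o \notin hatoms Phi) ->
  (msat M Phi <-> msat (Mprime p M) (tr p (o0 M) Phi)).
Proof.
move=> M_wf p_inj p_fresh Phi_fresh.
exact: (tr_sat_spec M_wf p_inj p_fresh).1 Phi Phi_fresh [:: s0 M] [::] isT isT.
Qed.
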